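(* Let $d\ge1$ and let $P$ be a probability distribution on $\{0,1\}^d$ with $P(\nu)>0$ for every $\nu\in\{0,1\}^d$. Define \[ \lambda(P):=\sup\{\lambda\ge0\mid \exists\, Q \text{ a probability distribution on }\{0,1\}^d\text{ with independent marginals such that } P(\nu)\ge\lambda Q(\nu)\ \forall \nu\in\{0,1\}^d\}. \] For $\omega\in\{0,1\}^d$ and $q\in[0,1]^d$ let $f_\omega(q):=\prod_{i=1}^d q_i^{-\omega_i}(1-q_i)^{\omega_i-1}\in\mathbb{R}\cup\{+\infty\}$ (with $0^0=1$, $1/0=+\infty$), and let \[ \mathcal{Q}_\omega:=\{q\in[0,1]^d \mid \forall \nu\in\{0,1\}^d:\ P(\omega)f_\omega(q)\le P(\nu)f_\nu(q)\}. \] Then \[ \lambda(P)=\max_{\omega\in\{0,1\}^d}\ \max_{q\in\mathcal{Q}_\omega} P(\omega)f_\omega(q). \]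
   Context: A probability distribution $Q$ on $\{0,1\}^d$ has independent marginals if $Q=\mu_1\otimes\cdots\otimes\mu_d$ for some probability distributions $\mu_1,\ldots,\mu_d$ on $\{0,1\}$, i.e. $Q$ is the law of a vector of independent (not necessarily identically distributed) Bernoulli random variables. *)

From HB Require Import structures.
From mathcomp Require Import all_boot all_order all_algebra.
From mathcomp Require Import all_classical all_reals.
From mathcomp Require Import ereal.
Set Implicit Arguments. Unset Strict Implicit. Unset Printing Implicit Defensive.
Import Order.TTheory GRing.Theory Num.Theory.
Local Open Scope ring_scope.

Definition cube (d : nat) := {ffun 'I_d -> bool}.

Definition is_prob {R : realType} {T : finType} (Q : T -> R) : Prop :=
  (forall x, 0 <= Q x) /\ \sum_(x : T) Q x = 1.

Definition indep_marginals {R : realType} (d : nat) (Q : cube d -> R) : Prop :=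
  exists mu : 'I_d -> bool -> R,
    (forall i, is_prob (mu i)) /\
    forall nu : cube d, Q nu = \prod_(i < d) mu i (nu i).

Definition lambdaP {R : realType} (d : nat) (P : cube d -> R) : R :=
  sup [set l : R | 0 <= l /\ exists Q : cube d -> R,
        is_prob Q /\ indep_marginals Q /\ forall nu, l * Q nu <= P nu].

Definition einv {R : realType} (x : R) : \bar R :=
  if x == 0 then +oo%E else (x^-1)%:E.

(* f_omega(q) = prod_i q_i^{-omega_i} (1-q_i)^{omega_i - 1}, with 0^0 = 1, 1/0 = +oo *)
Definition f_om {R : realType} (d : nat) (om : cube d) (q : 'I_d -> R) : \bar R :=
  (\prod_(i < d) (if om i then einv (q i) else einv (1 - q i)))%E.

Definition in_unit_cube {R : realType} (d : nat) (q : 'I_d -> R) : Prop :=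
  forall i, 0 <= q i <= 1.

Definition Qset {R : realType} (d : nat) (P : cube d -> R) (om : cube d)
    (q : 'I_d -> R) : Prop :=
  in_unit_cube q /\
  forall nu : cube d, ((P om)%:E * f_om om q <= (P nu)%:E * f_om nu q)%E.

From HB Require Import structures.
From mathcomp Require Import all_boot all_order all_algebra.
From mathcomp Require Import all_classical all_reals.
From mathcomp Require Import ereal.
From mathcomp Require Import topology normedtype derive.
Import Order.TTheory GRing.Theory Num.Theory.
Import numFieldNormedType.Exports.
Local Open Scope ring_scope.

(* Every q in [0,1]^d determines the product distribution Q_q, and
   P(nu) f_nu(q) = P(nu) / Q_q(nu).  The largest l with l Q_q <= P is
   therefore 1 / m(q), where m(q) = max_nu Q_q(nu) / P(nu), and
   min_nu P(nu) f_nu(q) = 1 / m(q) is attained exactly at the maximisers of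
   the ratio, i.e. Q_omega is the set of q for which omega maximises it.
   Both sides of the identity thus equal 1 / min_q m(q); the minimum exists
   since m is continuous on the compact cube. *)

Definition product_pmf {R : realType} {d : nat} (q : 'I_d -> R) (nu : cube d) : R :=
  \prod_(i < d) (if nu i then q i else 1 - q i).

Lemma einvM (R : realType) (a b : R) : 0 <= a -> 0 <= b ->
  (einv a * einv b)%E = einv (a * b).
Proof.
rewrite /einv => a0 b0; have [->|an0] := eqVneq a 0.
  rewrite mul0r eqxx; have [//|bn0] := eqVneq b 0.
  by rewrite mulyr gtr0_sg ?mul1e // invr_gt0 lt0r bn0.
have [->|bn0] := eqVneq b 0.
  by rewrite mulr0 eqxx mulry gtr0_sg ?mul1e // invr_gt0 lt0r an0.
by rewrite mulf_eq0 (negbTE an0) (negbTE bn0) -EFinM invfM mulrC.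
Qed.

Lemma einv_prod (R : realType) (I : Type) (s : seq I) (x : I -> R) :
  (forall i, 0 <= x i) ->
  (\prod_(i <- s) einv (x i))%E = einv (\prod_(i <- s) x i).
Proof.
move=> x0; elim: s => [|a s IH]; first by rewrite !big_nil /einv oner_eq0 invr1.
by rewrite !big_cons IH einvM // prodr_ge0.
Qed.

Section product_pmf.
Context {R : realType} {d : nat}.
Implicit Types (q : 'I_d -> R) (nu : cube d).

Lemma bernoulli_ge0 q (b : bool) i : in_unit_cube q ->
  0 <= (if b then q i else 1 - q i).
Proof. by move=> /(_ i)/andP[q0 q1]; case: b; rewrite ?subr_ge0. Qed.

Lemma product_pmf_ge0 q nu : in_unit_cube q -> 0 <= product_pmf q nu.
Proof. by move=> hq; apply: prodr_ge0 => i _; apply: bernoulli_ge0. Qed.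

Lemma sum_product_pmf q : \sum_nu product_pmf q nu = 1.
Proof.
rewrite /product_pmf -(bigA_distr_bigA (fun i b => if b then q i else 1 - q i)).
by apply: big1 => i _; rewrite big_bool /= addrC subrK.
Qed.

Lemma product_pmf_prob q : in_unit_cube q -> is_prob (product_pmf q).
Proof.
by move=> hq; split; [move=> nu; apply: product_pmf_ge0 | apply: sum_product_pmf].
Qed.

Lemma product_pmf_indep_marginals q : in_unit_cube q ->
  indep_marginals (product_pmf q).
Proof.
move=> hq; exists (fun i (b : bool) => if b then q i else 1 - q i); split => //.
move=> i; split; first by move=> b; apply: bernoulli_ge0.
by rewrite big_bool /= addrC subrK.
Qed.

Lemma indep_marginalsP (Q : cube d -> R) : indep_marginals Q ->
  exists2 q, in_unit_cube q & Q =1 product_pmf q.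
Proof.
move=> [mu [hmu QE]]; exists (mu^~ true).
  move=> i; have [mu0 mu1] := hmu i.
  by rewrite mu0 -mu1 big_bool /= lerDl mu0.
have mu_false i : mu i false = 1 - mu i true.
  by have [_] := hmu i; rewrite big_bool /= => <-; rewrite addrC addrK.
by move=> nu; rewrite QE; apply: eq_bigr => i _; case: (nu i); rewrite ?mu_false.
Qed.

Lemma f_omE (om : cube d) q : in_unit_cube q -> f_om om q = einv (product_pmf q om).
Proof.
move=> hq; rewrite -einv_prod; last by move=> i; apply: bernoulli_ge0.
by apply: eq_bigr => i _; case: (om i).
Qed.

End product_pmf.

Definition max_ratio {R : realType} {d : nat} (P : cube d -> R) (q : 'I_d -> R) : R :=
  \big[Order.max/0]_nu (product_pmf q nu / P nu).

Section max_ratio.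
Context {R : realType} {d : nat} {P : cube d -> R}.
Hypotheses (hP : is_prob P) (hpos : forall nu, 0 < P nu).
Implicit Types (q : 'I_d -> R) (nu om : cube d).

Lemma product_pmf_le_max_ratio q nu : product_pmf q nu <= max_ratio P q * P nu.
Proof. by rewrite -ler_pdivrMr //; apply: le_bigmax. Qed.

Lemma max_ratio_ge1 q : 1 <= max_ratio P q.
Proof.
rewrite -(sum_product_pmf q) -[max_ratio P q]mulr1 -hP.2 mulr_sumr.
by apply: ler_sum => nu _; apply: product_pmf_le_max_ratio.
Qed.

Lemma max_ratio_gt0 q : 0 < max_ratio P q.
Proof. exact: lt_le_trans ltr01 (max_ratio_ge1 q). Qed.

Lemma max_ratio_attained {q} : in_unit_cube q ->
  exists nu, product_pmf q nu = max_ratio P q * P nu.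
Proof.
move=> hq; have [nu _ E] := @eq_bigmax _ R _ 0 [ffun=> true] predT
  (fun nu => product_pmf q nu / P nu) isT
  (fun nu _ => divr_ge0 (product_pmf_ge0 q nu hq) (ltW (hpos nu))).
by exists nu; rewrite /max_ratio E divfK // gt_eqF.
Qed.

Lemma Pf_omE q nu : in_unit_cube q ->
  ((P nu)%:E * f_om nu q)%E =
    if product_pmf q nu == 0 then +oo%E else (P nu / product_pmf q nu)%:E.
Proof.
move=> hq; rewrite f_omE // /einv; case: ifP => _; last by rewrite -EFinM.
by rewrite mulry gtr0_sg ?mul1e.
Qed.

Lemma max_ratio_inv_le_Pf_om {q} nu : in_unit_cube q ->
  ((max_ratio P q)^-1%:E <= (P nu)%:E * f_om nu q)%E.
Proof.
move=> hq; rewrite Pf_omE //; have [_|Qnu0] := eqVneq; first exact: leey.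
have Qnu_gt0 : 0 < product_pmf q nu by rewrite lt0r Qnu0 product_pmf_ge0.
have m0 := max_ratio_gt0 q.
rewrite lee_fin ler_pdivlMr // mulrC ler_pdivrMr //.
by rewrite mulrC product_pmf_le_max_ratio.
Qed.

Lemma Pf_om_argmax {q nu} : in_unit_cube q ->
  product_pmf q nu = max_ratio P q * P nu ->
  ((P nu)%:E * f_om nu q)%E = (max_ratio P q)^-1%:E.
Proof.
move=> hq Qnu; have m0 := max_ratio_gt0 q; have Pnu0 := hpos nu.
rewrite Pf_omE // Qnu mulf_eq0 !gt_eqF //=.
by rewrite invfM mulrCA divff ?mulr1 // gt_eqF.
Qed.

Lemma Qset_argmax {q om} : in_unit_cube q ->
  product_pmf q om = max_ratio P q * P om -> Qset P om q.
Proof.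
move=> hq Qom; split => // nu.
by rewrite Pf_om_argmax //; apply: max_ratio_inv_le_Pf_om.
Qed.

Lemma Qset_valueE {q om} : Qset P om q ->
  ((P om)%:E * f_om om q)%E = (max_ratio P q)^-1%:E.
Proof.
move=> [hq om_min]; apply/le_anti/andP; split; last exact: max_ratio_inv_le_Pf_om.
have [nu Qnu] := max_ratio_attained hq.
by rewrite -(Pf_om_argmax hq Qnu) om_min.
Qed.

End max_ratio.

Section continuity.
Context {R : realType} {T : topologicalType}.

Lemma continuous_bigmax (I : Type) (s : seq I) (f : I -> T -> R) :
  (forall i, continuous (f i)) ->
  continuous (fun x => \big[Order.max/0]_(i <- s) f i x).
Proof.
move=> cf; elim: s => [|i s IH].
  suff -> : (fun x => \big[Order.max/0]_(i <- [::]) f i x) = cst 0 by exact: cst_continuous.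
  by apply/funext => x; rewrite big_nil.
suff -> : (fun x => \big[Order.max/0]_(j <- i :: s) f j x) =
    f i \max (fun x => \big[Order.max/0]_(j <- s) f j x).
  by move=> x; exact: (continuous_max (cf i x) (IH x)).
by apply/funext => x; rewrite big_cons.
Qed.

Lemma continuous_prod (I : Type) (s : seq I) (f : I -> T -> R) :
  (forall i, continuous (f i)) ->
  continuous (fun x => \prod_(i <- s) f i x).
Proof.
move=> cf; elim: s => [|i s IH].
  suff -> : (fun x => \prod_(i <- [::]) f i x) = cst 1 by exact: cst_continuous.
  by apply/funext => x; rewrite big_nil.
suff -> : (fun x => \prod_(j <- i :: s) f j x) = f i \* (fun x => \prod_(j <- s) f j x).
  by move=> x; exact: (continuousM (cf i x) (IH x)).
by apply/funext => x; rewrite big_cons.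
Qed.

End continuity.

Section minimum.
Import ArrowAsProduct.
Context {R : realType} {d : nat} (P : cube d -> R).

Lemma continuous_product_pmf (nu : cube d) :
  continuous (fun q : 'I_d -> R => product_pmf q nu).
Proof.
apply: continuous_prod => i q; case: (nu i); first exact: proj_continuous.
by apply: continuousB; [exact: cst_continuous | exact: proj_continuous].
Qed.

Lemma continuous_max_ratio : continuous (max_ratio P).
Proof.
apply: continuous_bigmax => nu q.
apply: (@continuousM R _ (product_pmf^~ nu) (cst (P nu)^-1)).
  exact: continuous_product_pmf.
exact: cst_continuous.
Qed.

Lemma max_ratio_min_attained : exists2 q, in_unit_cube q &
  forall q', in_unit_cube q' -> max_ratio P q <= max_ratio P q'.
Proof.
pose cube01 := [set q : 'I_d -> R | forall i, `[0, 1]%classic (q i)]%classic.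
have cube_compact : compact cube01 by exact: tychonoff (fun=> @segment_compact R 0 1).
have cube0 : (cube01 !=set0)%classic.
  by exists (fun=> 0) => i /=; rewrite in_itv /= lexx ler01.
have [q /set_mem q_cube q_min] := compact_EVT_min cube0 cube_compact
  (continuous_subspaceT continuous_max_ratio).
exists q => [i|q' q'_cube]; first by have := q_cube i; rewrite /= in_itv.
by apply: q_min; rewrite inE => i /=; rewrite in_itv; exact: q'_cube.
Qed.

End minimum.

Definition dominated_scalings {R : realType} {d : nat} (P : cube d -> R) : set R :=
  [set l | 0 <= l /\ exists Q : cube d -> R,
     is_prob Q /\ indep_marginals Q /\ forall nu, l * Q nu <= P nu].

Section lambda.
Context {R : realType} {d : nat} {P : cube d -> R}.
Hypotheses (hP : is_prob P) (hpos : forall nu, 0 < P nu).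

Lemma max_ratio_inv_dominated {q} : in_unit_cube q ->
  dominated_scalings P (max_ratio P q)^-1.
Proof.
move=> hq; have m0 := max_ratio_gt0 hP hpos q.
split; first by rewrite invr_ge0 ltW.
exists (product_pmf q); split; first exact: product_pmf_prob.
split; first exact: product_pmf_indep_marginals.
by move=> nu; rewrite mulrC ler_pdivrMr // mulrC product_pmf_le_max_ratio.
Qed.

Lemma dominated_le_max_ratio_inv l : dominated_scalings P l ->
  exists2 q, in_unit_cube q & l <= (max_ratio P q)^-1.
Proof.
move=> [_ [Q [_ [/indep_marginalsP [q hq QE] lQ]]]]; exists q => //.
have m0 := max_ratio_gt0 hP hpos q.
have [nu Qnu] := max_ratio_attained hpos hq.
have := lQ nu; rewrite QE Qnu mulrA -[leRHS]mul1r ler_pM2r //.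
by rewrite -ler_pdivlMr // div1r.
Qed.

Lemma lambdaP_max_ratio {qs} : in_unit_cube qs ->
  (forall q, in_unit_cube q -> max_ratio P qs <= max_ratio P q) ->
  lambdaP P = (max_ratio P qs)^-1.
Proof.
move=> hqs qs_min; rewrite /lambdaP -/(dominated_scalings P).
have qs_mem := max_ratio_inv_dominated hqs.
have qs_ub : ubound (dominated_scalings P) (max_ratio P qs)^-1.
  move=> l /dominated_le_max_ratio_inv [q hq /le_trans]; apply.
  by rewrite lef_pV2 ?posrE ?(max_ratio_gt0 hP hpos) ?qs_min.
apply/le_anti/andP; split; first by apply: ge_sup qs_ub; exists (max_ratio P qs)^-1.
by apply: ub_le_sup => //; exists (max_ratio P qs)^-1.
Qed.

End lambda.

Theorem lemma2 (R : realType) (d : nat) (hd : (1 <= d)%N) (P : cube d -> R)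
    (hP : is_prob P) (hpos : forall nu, 0 < P nu) :
  exists (om : cube d) (q : 'I_d -> R),
    Qset P om q /\
    (lambdaP P)%:E = ((P om)%:E * f_om om q)%E /\
    (forall (om' : cube d) (q' : 'I_d -> R), Qset P om' q' ->
       ((P om')%:E * f_om om' q' <= (P om)%:E * f_om om q)%E).
Proof.
have [qs hqs qs_min] := max_ratio_min_attained P.
have [om Qom] := max_ratio_attained hpos hqs.
exists om, qs; split; first exact: (Qset_argmax hP hpos hqs Qom).
rewrite (Pf_om_argmax hP hpos hqs Qom) (lambdaP_max_ratio hP hpos hqs qs_min).
split=> // om' q' Qom'; rewrite (Qset_valueE hP hpos Qom') lee_fin.
rewrite lef_pV2 ?posrE ?(max_ratio_gt0 hP hpos) //.
by apply: qs_min; case: Qom'.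
Qed.
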